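(* For every graph $G$, $\chi_{td}(\mathrm{cl}(G)) \leq 2\chi_{td}(G)+1$.
   Context: For a simple graph $G$ and a positive integer $k$, a proper $k$-total difference labeling of $G$ is a function $f: V(G)\to\{1,\dots,k\}$, extended to edges by $f(\{u,v\}) = |f(u)-f(v)|$, such that: (i) adjacent vertices receive different labels; (ii) two distinct edges sharing a vertex receive different labels; (iii) no edge receives the same label as either of its endpoints. $\chi_{td}(G)$ denotes the smallest $k$ for which such a labeling exists. The clone $\mathrm{cl}(G)$ of $G$ is the Cartesian product $G \,\square\, K_2$: it consists of two copies $\{x_i\}$ and $\{y_i\}$ of the vertex set $\{g_i\}$ of $G$, where $x_i x_j$ and $y_i y_j$ are edges iff $g_i g_j$ is an edge of $G$, and $x_i y_j$ is an edge iff $i=j$. *)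

From mathcomp Require Import all_boot.
Set Implicit Arguments. Unset Strict Implicit. Unset Printing Implicit Defensive.

Definition simple_graph (T : finType) (e : rel T) : Prop :=
  symmetric e /\ irreflexive e.

Definition absdiff (m n : nat) : nat := (m - n) + (n - m).

(* f : V(G) -> {1,..,k} is a proper k-total difference labeling; the edge
   uv gets label |f u - f v|. *)
Definition proper_td_labeling (T : finType) (e : rel T) (k : nat)
    (f : T -> nat) : Prop :=
  [/\ forall v, 1 <= f v <= k,
      forall u v, e u v -> f u != f v,
      forall u v w, e u v -> e u w -> v != w ->
        absdiff (f u) (f v) != absdiff (f u) (f w) &
      forall u v, e u v ->
        (absdiff (f u) (f v) != f u) && (absdiff (f u) (f v) != f v)].

Definition has_td_labeling (T : finType) (e : rel T) (k : nat) : Prop :=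
  exists f : T -> nat, proper_td_labeling e k f.

Definition is_chi_td (T : finType) (e : rel T) (k : nat) : Prop :=
  has_td_labeling e k /\ forall j, j < k -> ~ has_td_labeling e j.

(* The clone cl(G) = G [] K_2 on vertex set bool * T:
   (b, g) is x_g if b = false and y_g if b = true. *)
Definition clone (T : finType) (e : rel T) : rel (bool * T) :=
  fun p q => ((p.1 == q.1) && e p.2 q.2) || ((p.1 != q.1) && (p.2 == q.2)).

(** The clone consists of two copies of G joined by the rungs x_i y_i.  Label the
    x-copy by a minimum labeling f of G (values in [1, k]) and the y-copy by f
    shifted by k + 1 (values in [k + 2, 2k + 1]).  Edges inside a copy keep
    their labels from G, which are smaller than k, while every rung gets the
    label k + 1, used by no vertex and no other edge; so all three conditions
    are inherited from G. *)
From Stdlib Require Import Classical Wf_nat.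
From mathcomp Require Import all_boot zify.

Lemma absdiffDr (c m n : nat) : absdiff (m + c) (n + c) = absdiff m n.
Proof. by rewrite /absdiff !subnDr. Qed.

Lemma absdiff_eq0 (m n : nat) : (absdiff m n == 0) = (m == n).
Proof. rewrite /absdiff; apply/eqP/eqP; lia. Qed.

Lemma absdiff_ltn (k m n : nat) :
  1 <= m <= k -> 1 <= n <= k -> absdiff m n < k.
Proof. rewrite /absdiff; lia. Qed.

Lemma td_labeling_chi_td (T : finType) (e : rel T) (n : nat) :
  has_td_labeling e n -> exists k, is_chi_td e k /\ k <= n.
Proof.
move=> lab_n.
have [k [[lab_k k_least] _]] :=
  @dec_inh_nat_subset_has_unique_least_element (has_td_labeling e)
    (fun j => classic _) (ex_intro _ n lab_n).
exists k; split; last exact/leP/k_least.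
split=> // j lt_jk lab_j.
by move/leP: (k_least j lab_j); rewrite leqNgt lt_jk.
Qed.

Lemma clone_edge (T : finType) (e : rel T) (b b' : bool) (t t' : T) :
  clone e (b, t) (b', t') = if b == b' then e t t' else t == t'.
Proof. by rewrite /clone /=; case: (b =P b') => /=; rewrite ?orbF. Qed.

Definition clone_label {T : finType} (k : nat) (f : T -> nat) (p : bool * T) : nat :=
  f p.2 + (if p.1 then k.+1 else 0).

Section CloneLabeling.

Variables (T : finType) (e : rel T) (k : nat) (f : T -> nat).
Hypothesis f_proper : proper_td_labeling e k f.

Let f_range (t : T) : 1 <= f t <= k.
Proof. by case: f_proper. Qed.

Let inner_label_ltn (t t' : T) : absdiff (f t) (f t') < k.+1.
Proof. exact/ltnW/absdiff_ltn. Qed.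

Lemma clone_label_range (p : bool * T) : 1 <= clone_label k f p <= 2 * k + 1.
Proof. by case: p => [[] t] /=; have := f_range t; rewrite /clone_label /=; lia. Qed.

Lemma clone_edge_label (b b' : bool) (t t' : T) :
  clone e (b, t) (b', t') ->
  absdiff (clone_label k f (b, t)) (clone_label k f (b', t')) =
    if b == b' then absdiff (f t) (f t') else k.+1.
Proof.
rewrite clone_edge /clone_label /=.
case: eqP => [<- _ | /eqP neq_bb' /eqP <-]; first exact: absdiffDr.
by move: neq_bb'; case: b; case: b' => //= _; rewrite /absdiff; lia.
Qed.

Lemma clone_label_proper : proper_td_labeling (clone e) (2 * k + 1) (clone_label k f).
Proof.
case: f_proper => _ f_adj f_inc f_end.
split; first exact: clone_label_range.
- move=> [b t] [b' t'] cl_e; rewrite -absdiff_eq0 clone_edge_label //.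
  by move: cl_e; rewrite clone_edge; case: eqP => // _ /f_adj; rewrite absdiff_eq0.
- move=> [b t] [b' t'] [b'' t''] cl_v cl_w neq_vw.
  rewrite !clone_edge_label //.
  move: cl_v cl_w neq_vw; rewrite !clone_edge.
  case: (b =P b') => [<-|/eqP neq_b']; case: (b =P b'') => [<-|/eqP neq_b''].
  + by move=> e_v e_w neq_vw; apply: f_inc => //; apply: contra neq_vw => /eqP ->.
  + by move=> _ _ _; rewrite neq_ltn inner_label_ltn.
  + by move=> _ _ _; rewrite neq_ltn inner_label_ltn orbT.
  + (* both neighbours are the unique rung partner of (b, t) *)
    have -> : b'' = b' by move: neq_b' neq_b''; case: b; case: b'; case: b''.
    by move=> /eqP <- /eqP <-; rewrite eqxx.
- move=> [b t] [b' t'] cl_e; rewrite clone_edge_label //.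
  have := f_range t; have := f_range t'.
  move: cl_e; rewrite clone_edge /clone_label /=.
  case: (b =P b') => [<- /f_end|/eqP neq_bb' /eqP <-].
  + by rewrite /absdiff; case: b; lia.
  + by move: neq_bb'; case: b; case: b' => //= _; lia.
Qed.

End CloneLabeling.

Theorem mainTheorem8 (T : finType) (e : rel T) (k : nat) :
  simple_graph e -> is_chi_td e k ->
  exists k', is_chi_td (clone e) k' /\ k' <= 2 * k + 1.
Proof.
(* the construction works for any relation *)
move=> _ [[f f_proper] _].
apply: td_labeling_chi_td; exists (clone_label k f).
exact: clone_label_proper.
Qed.
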